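(* Let $(\beta,\alpha)$ satisfy $\beta\in(1,2)$ and $\alpha\in[0,2-\beta]$, and let $f=T_{\beta,\alpha}$, $T_{\beta,\alpha}(x)=\beta x+\alpha \pmod 1$ on $[0,1]$, with critical point $c=\frac{1-\alpha}{\beta}$. Fix $a\in[0,\frac{1-\alpha}{\beta}]$ and for $b\in[c,1]$ consider the hole $H=(a,b)$ and the survivor set $S_f(H)=\{x\in[0,1]: f^n(x)\notin H\ \forall n\ge0\}$. Then the function $\eta_f(a): b\mapsto \dim_{\mathcal H}(S_f(H))$ is a devil staircase, that is, $\eta_f(a)$ is non-increasing and locally constant at Lebesgue-almost every point.
   Context: $\dim_{\mathcal H}$ denotes Hausdorff dimension. *)

From HB Require Import structures.
From mathcomp Require Import all_boot all_order all_algebra.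
From mathcomp Require Import all_classical all_reals all_analysis.
Set Implicit Arguments. Unset Strict Implicit. Unset Printing Implicit Defensive.
Import Order.TTheory GRing.Theory Num.Theory.
Local Open Scope classical_set_scope.
Local Open Scope ring_scope.

Definition mod1 {R : realType} (x : R) : R := x - (Num.floor x)%:~R.

Definition T_ba {R : realType} (beta alpha : R) (x : R) : R := mod1 (beta * x + alpha).

Definition survivor {R : realType} (f : R -> R) (a b : R) : set R :=
  [set x | 0 <= x <= 1 /\ forall n : nat, ~ (a < iter n f x < b)].

(* diameter of a subset of R (used only for bounded sets; sup set0 = 0) *)
Definition diam {R : realType} (U : set R) : R :=
  sup [set `|x - y| | x in U & y in U].

Definition delta_cover {R : realType} (delta : R) (E : set R) (U : nat -> set R) :=
  E `<=` \bigcup_i U i /\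
  forall i, forall x y, U i x -> U i y -> `|x - y| <= delta.

Definition hausdorff_content {R : realType} (s delta : R) (E : set R) : \bar R :=
  ereal_inf [set (\sum_(0 <= i <oo) ((diam (U i)) `^ s)%:E)%E
            | U in [set U | delta_cover delta E U]].

Definition hausdorff_measure {R : realType} (s : R) (E : set R) : \bar R :=
  ereal_sup [set hausdorff_content s delta E | delta in [set d : R | 0 < d]].

(* Hausdorff dimension: inf { s > 0 | H^s(E) = 0 } (in \bar R; +oo if none) *)
Definition hausdorff_dim {R : realType} (E : set R) : \bar R :=
  ereal_inf [set s%:E | s in [set s : R | 0 < s /\ hausdorff_measure s E = 0%E]].

(* Enlarging the hole shrinks the survivor set, so [eta] is non-increasing.
   Suppose the orbit of b re-enters (c, b) at some time n and no earlier iterate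
   of b lies at a discontinuity of T.  Then T^n is continuous at b, and the
   survivor set does not change when b moves slightly: an orbit avoiding (a, b')
   stays away from b, since otherwise it would fall into (a, b) n steps later.
   The remaining b form a null set.  Those whose orbit meets a discontinuity are
   countably many.  For the others, the iterates of T stretch (b - r, b] affinely
   until its image straddles c; the part mapped into (c, b - r) is then an
   interval of length proportional to r free of such points.  So this set is
   porous, hence null by the Lebesgue density theorem. *)

From HB Require Import structures.
From mathcomp Require Import all_boot all_order all_algebra.
From mathcomp Require Import all_classical all_reals all_analysis.
From mathcomp Require Import ring lra.
From mathcomp Require Import measurable_realfun lebesgue_integral_differentiation.
Import Order.TTheory GRing.Theory Num.Theory.
Import numFieldNormedType.Exports.
Local Open Scope classical_set_scope.
Local Open Scope ring_scope.

Section hausdorff_dim_monotone.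
Context {R : realType}.
Implicit Types (s d : R) (E : set R).

Lemma le_hausdorff_content s d E1 E2 : E1 `<=` E2 ->
  (hausdorff_content s d E1 <= hausdorff_content s d E2)%E.
Proof.
move=> E12; apply: ereal_inf_le_tmp => _ [U [cov dU] <-].
by exists U => //; split => // x /E12 /cov.
Qed.

Lemma hausdorff_content_ge0 s d E : (0 <= hausdorff_content s d E)%E.
Proof.
apply: le_ereal_inf_tmp => _ [U _ <-].
by apply: nneseries_ge0 => n _ _; rewrite lee_fin powR_ge0.
Qed.

Lemma le_hausdorff_measure s E1 E2 : E1 `<=` E2 ->
  (hausdorff_measure s E1 <= hausdorff_measure s E2)%E.
Proof.
move=> E12; apply: ge_ereal_sup => _ [d d0 <-].
rewrite (le_trans (le_hausdorff_content s d _ _ E12)) //.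
by apply: ereal_sup_ubound; exists d.
Qed.

Lemma hausdorff_measure_ge0 s E : (0 <= hausdorff_measure s E)%E.
Proof.
apply: (le_trans (hausdorff_content_ge0 s 1 E)).
by apply: ereal_sup_ubound; exists 1 => //=; exact: ltr01.
Qed.

Lemma le_hausdorff_dim E1 E2 : E1 `<=` E2 ->
  (hausdorff_dim E1 <= hausdorff_dim E2)%E.
Proof.
move=> E12; apply: ereal_inf_le_tmp => _ [s [s0 hs] <-].
exists s => //; split => //; apply/eqP.
by rewrite eq_le hausdorff_measure_ge0 andbT -hs le_hausdorff_measure.
Qed.

End hausdorff_dim_monotone.

Section survivor.
Context {R : realType} (f : R -> R) (a : R).

Lemma survivorS b1 b2 : b1 <= b2 -> survivor f a b2 `<=` survivor f a b1.
Proof.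
move=> b12 x [x01 hx]; split => // n /andP[an nb1]; apply: (hx n).
by rewrite an (lt_le_trans nb1).
Qed.

Lemma survivor_locally_constant b n : a < iter n f b < b ->
  {for b, continuous (iter n f)} ->
  \forall b' \near b, survivor f a b' = survivor f a b.
Proof.
move=> /andP[a_t t_b] fnC; set t := iter n f b in a_t t_b.
pose eta := Num.min (t - a) (b - t) / 2.
have eta_gt0 : 0 < eta by rewrite divr_gt0 // lt_min !subr_gt0 a_t t_b.
have eta_a : eta <= (t - a) / 2 by rewrite ler_pM2r // ge_min lexx.
have eta_b : eta <= (b - t) / 2 by rewrite ler_pM2r // ge_min lexx orbT.
have [d d_gt0 hd] := (nbhs_ballP _ _).1 (cvgr_dist_lt _ _ fnC _ eta_gt0).
have e_gt0 : 0 < Num.min d eta by rewrite lt_min d_gt0.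
apply/nbhs_ballP; exists (Num.min d eta) => //.
have incl b1 b2 : ball b (Num.min d eta) b1 -> ball b (Num.min d eta) b2 ->
    survivor f a b1 `<=` survivor f a b2.
  rewrite /ball /= !lt_min => /andP[b1d b1e] /andP[b2d b2e] x [x01 hx].
  split => // m /andP[am mb2].
  have b1m : b1 <= iter m f x by rewrite leNgt; apply/negP => mb1; apply: (hx m); rewrite am.
  have /hd : ball b d (iter m f x).
    move: b1d b2d b1e b2e; rewrite /ball /= !ltr_norml =>
      /andP[? ?] /andP[? ?] /andP[? ?] /andP[? ?].
    by apply/andP; split; lra.
  rewrite /ball /= -/t ltr_norml => /andP[h1 h2].
  apply: (hx (n + m)); rewrite iterD.
  move: b1e; rewrite ltr_norml => /andP[? ?]; apply/andP; split; lra.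
move=> b' hb'; apply/seteqP; split; apply: incl => //; exact: ballxx.
Qed.

End survivor.

Lemma iter_continuous {T : topologicalType} (f : T -> T) n x :
  (forall k, (k < n)%N -> {for iter k f x, continuous f}) ->
  {for x, continuous (iter n f)}.
Proof.
elim: n => [_|n IH fC]; first exact: cvg_id.
have -> : iter n.+1 f = f \o iter n f by apply/funext => y; rewrite iterS.
apply: continuous_comp; last exact: fC.
by apply: IH => k kn; apply: fC; exact: ltnW.
Qed.

Lemma floor_near {R : realType} (x : R) : x \isn't a Num.int ->
  \forall y \near x, Num.floor y = Num.floor x.
Proof.
move=> xNint; have /andP[lex xlt] := floor_itv x.
have ltx : (Num.floor x)%:~R < x.
  by rewrite lt_neqAle lex andbT; apply: contraNneq xNint => <-; exact: intr_int.
near=> y; apply: floor_def; apply/andP; split.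
- by apply/ltW; near: y; exact: lt_nbhsr.
- by near: y; exact: lt_nbhsl.
Unshelve. all: by end_near.
Qed.

Lemma measurable_iter {d} {T : measurableType d} (g : T -> T) n :
  measurable_fun setT g -> measurable_fun setT (iter n g).
Proof.
move=> mg; elim: n => [|n IH]; first exact: measurable_id.
have -> : iter n.+1 g = g \o iter n g by apply/funext => x; rewrite iterS.
exact: measurableT_comp.
Qed.

Lemma measurable_lt_set {d} {T : measurableType d} {R : realType} (g h : T -> R) :
  measurable_fun setT g -> measurable_fun setT h -> measurable [set x | g x < h x].
Proof.
move=> mg mh; rewrite -[X in measurable X]setTI.
exact: (measurable_fun_ltr mg mh measurableT (Y := [set true])).
Qed.

Section beta_transformation.
Context {R : realType} (beta alpha : R).
Local Notation f := (T_ba beta alpha).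

Lemma T_ba_ge0 x : 0 <= f x.
Proof. by rewrite /T_ba /mod1 subr_ge0 floor_le. Qed.

Lemma T_ba_lt1 x : f x < 1.
Proof. by rewrite /T_ba /mod1 ltrBlDl -intrD1 floorD1_gt. Qed.

Lemma iter_T_ba_itv n x : 0 <= x <= 1 -> 0 <= iter n f x <= 1.
Proof. by case: n => [//|n] _; rewrite iterS T_ba_ge0 ltW ?T_ba_lt1. Qed.

Lemma T_baB x y : Num.floor (beta * x + alpha) = Num.floor (beta * y + alpha) ->
  f x - f y = beta * (x - y).
Proof. by rewrite /T_ba /mod1 => ->; lra. Qed.

Lemma T_ba_continuous x : beta * x + alpha \isn't a Num.int ->
  {for x, continuous f}.
Proof.
move=> xNint; set m := Num.floor (beta * x + alpha).
pose g y := beta * y + alpha - m%:~R.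
have affC : (fun y => beta * y + alpha) @ x --> beta * x + alpha.
  by apply: cvgD; [apply: cvgM; [exact: cvg_cst | exact: cvg_id] | exact: cvg_cst].
have gf : {near x, g =1 f}.
  have fl : \forall y \near x, Num.floor (beta * y + alpha) = m.
    exact: affC (floor_near _ xNint).
  by apply: filterS fl => y fly; rewrite /g /T_ba /mod1 fly.
apply: cvg_trans (near_eq_cvg gf) _.
have -> : f x = g x by [].
by apply: cvgB => //; exact: cvg_cst.
Qed.

Lemma countable_preimage_T_ba (A : set R) : beta != 0 -> countable A ->
  countable (f @^-1` A).
Proof.
move=> beta_neq0 cA.
pose g (p : R * int) := (p.1 + p.2%:~R - alpha) / beta.
have sub : f @^-1` A `<=` g @` (A `*` setT).
  move=> b Ab; exists (f b, Num.floor (beta * b + alpha)) => //=.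
  by rewrite /g /T_ba /mod1 /=; field.
apply: sub_countable (subset_card_le sub) _.
exact: sub_countable (card_image_le _ _) (countableX cA (countableP _)).
Qed.

Definition hits_discontinuity : set R :=
  [set b | exists k, beta * iter k f b + alpha \is a Num.int].

Lemma countable_hits_discontinuity : beta != 0 -> countable hits_discontinuity.
Proof.
move=> beta_neq0; set D := [set y : R | beta * y + alpha \is a Num.int].
have cD : countable D.
  have sub : D `<=` (fun m : int => (m%:~R - alpha) / beta) @` setT.
    by move=> y /intrP[m ym]; exists m => //; rewrite -ym; field.
  exact: sub_countable (subset_card_le sub) (sub_countable (card_image_le _ _) (countableP _)).
have -> : hits_discontinuity = \bigcup_k (iter k f @^-1` D).
  by apply/seteqP; split => [b [k hk]|b [k _ hk]]; exists k.
apply: bigcup_countable => // k _; elim: k => [//|k IH].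
have sub : iter k.+1 f @^-1` D `<=` f @^-1` (iter k f @^-1` D).
  by move=> x; rewrite /preimage /= -iterS iterSr.
exact: sub_countable (subset_card_le sub) (countable_preimage_T_ba _ beta_neq0 IH).
Qed.

Lemma measurable_T_ba : 0 <= beta -> measurable_fun setT f.
Proof.
move=> beta_ge0; apply: measurable_funB.
  by apply: nondecreasing_measurable => // x y xy; rewrite lerD2r ler_wpM2l.
apply: nondecreasing_measurable => // x y xy.
by rewrite ler_int le_floor // lerD2r ler_wpM2l.
Qed.

End beta_transformation.

Lemma bernoulli_le_expr {R : realFieldType} (x : R) n : 1 <= x ->
  1 + n%:R * (x - 1) <= x ^+ n.
Proof.
move=> x_ge1; elim: n => [|n IH]; first by rewrite mul0r addr0 expr0.
have : 0 <= n%:R * (x - 1) :> R by rewrite mulr_ge0 // subr_ge0.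
by rewrite exprS -natr1; nra.
Qed.

Lemma expr_unbounded {R : realType} (x M : R) : 1 < x -> exists n, M < x ^+ n.
Proof.
move=> x_gt1; set n := Num.truncn (M / (x - 1)); exists n.+1.
have : M / (x - 1) < n.+1%:R by exact: truncnS_gt.
rewrite ltr_pdivrMr ?subr_gt0 // => hM.
have := bernoulli_le_expr x n.+1 (ltW x_gt1); lra.
Qed.

Section porous.
Context {R : realType}.
Local Notation mu := (@lebesgue_measure R).

Lemma countable_negligible {A : set R} : countable A -> mu.-negligible A.
Proof.
move=> cA; exists A; split => //; last exact: countable_lebesgue_measure0.
by apply: countable_measurable => // x; exact: measurable_set1.
Qed.

Lemma lebesgue_measure_ball_gap {A : set R} {x r p q : R} : measurable A ->
  x - r <= p -> p < q -> q <= x + r -> (forall y, p < y < q -> ~ A y) ->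
  (mu (A `&` ball x r) <= (r *+ 2 - (q - p))%:E)%E.
Proof.
move=> mA xp pq qx gap; set I := [set` `]p, q[] : set R.
have mI : measurable I by exact: measurable_itv.
have Iball : I `<=` ball x r.
  move=> y; rewrite /I /= in_itv /= ball_itv /= in_itv /= => /andP[py yq].
  by apply/andP; split; lra.
have r_gt0 : 0 <= r by lra.
have -> : ((r *+ 2 - (q - p))%:E = mu (ball x r `\` I))%E.
  rewrite measureD ?setIidr //; last 2 first.
  - exact: measurable_ball.
  - by change (mu (ball x r) < +oo)%E; rewrite lebesgue_measure_ball // ltry.
  change ((r *+ 2 - (q - p))%:E = mu (ball x r) - mu I)%E.
  by rewrite lebesgue_measure_ball // lebesgue_measure_itv /= lte_fin pq -EFinB.
apply: le_measure; rewrite ?inE.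
- by apply: measurableI => //; exact: measurable_ball.
- by apply: measurableD => //; exact: measurable_ball.
by move=> y [Ay yr]; split => // yI; apply: (gap y).
Qed.

Lemma porous_negligible (A : set R) : measurable A ->
  (forall x, A x -> exists2 k, 0 < k &
    \forall r \near 0^'+, exists p q, [/\ x - r <= p, p < q, q <= x + r,
      k * r <= q - p & forall y, p < y < q -> ~ A y]) ->
  mu.-negligible A.
Proof.
move=> mA porous; have [N [mN N0 densN]] := lebesgue_density mA.
exists N; split => // x Ax; apply: densN => /= dens.
have [k k_gt0 gaps] := porous x Ax.
suff : \forall r \near 0^'+,
    (mu (A `&` ball x r) * (mu (ball x r))^-1 <= (1 - k / 2)%:E)%E.
  by move/cvge_le/(_ dens); rewrite indicE mem_set // lee_fin /= mulr1n; lra.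
apply: filterS2 (nbhs_right_gt 0) gaps => r r_gt0 [p [q [xp pq qx kr gap]]].
rewrite lebesgue_measure_ball ?(ltW r_gt0) // inver mulrn_eq0 /= gt_eqF //.
have inv_ge0 : (0 <= ((r *+ 2)^-1)%:E)%E by rewrite lee_fin invr_ge0 mulrn_wge0 ?ltW.
rewrite (le_trans (lee_wpmul2r inv_ge0 (lebesgue_measure_ball_gap mA xp pq qx gap))) //.
rewrite -EFinM lee_fin -mulr_natr ler_pdivrMr ?mulr_gt0 //; nra.
Qed.

End porous.

Section affine_iterates.
Context {R : realType} (beta alpha : R).
Local Notation f := (T_ba beta alpha).

Definition affine_iter_on (b r : R) (j : nat) :=
  forall y, b - r < y <= b -> iter j f y = iter j f b - beta ^+ j * (b - y).

Lemma affine_iter_on0 b r : affine_iter_on b r 0.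
Proof. by move=> y _; rewrite expr0 mul1r /=; ring. Qed.

Lemma affine_iter_onS b r j : affine_iter_on b r j ->
  (forall y, b - r < y <= b ->
     Num.floor (beta * iter j f y + alpha) = Num.floor (beta * iter j f b + alpha)) ->
  affine_iter_on b r j.+1.
Proof.
move=> aff fl y yJ; rewrite !iterS exprS -mulrA.
have -> : beta ^+ j * (b - y) = iter j f b - iter j f y by rewrite (aff y yJ); ring.
by rewrite -[LHS](subrK (f (iter j f b))) T_baB ?fl //; ring.
Qed.

Lemma affine_iter_on_le2 {b r : R} {j : nat} : 0 < r -> 0 <= b - r -> b <= 1 ->
  affine_iter_on b r j -> beta ^+ j * r <= 2.
Proof.
move=> r_gt0 br b1 aff.
have mid : b - r < b - r / 2 <= b by apply/andP; split; lra.
have /andP[_ fb1] : 0 <= iter j f b <= 1 by apply: iter_T_ba_itv; lra.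
have /andP[fm0 _] : 0 <= iter j f (b - r / 2) <= 1 by apply: iter_T_ba_itv; lra.
move: fm0; rewrite (aff _ mid) (_ : b - (b - r / 2) = r / 2); last by ring.
lra.
Qed.

End affine_iterates.

Section nonreturning.
Context {R : realType} (beta alpha : R).
Hypotheses (beta_gt1 : 1 < beta) (alpha_ge0 : 0 <= alpha) (alpha_le : alpha <= 2 - beta).
Local Notation f := (T_ba beta alpha).
Local Notation c := ((1 - alpha) / beta).

Let beta_gt0 : 0 < beta. Proof. exact: lt_trans ltr01 beta_gt1. Qed.

Lemma critical_gt0 : 0 < c.
Proof. by rewrite divr_gt0 // subr_gt0; move: (alpha_le) (beta_gt1); lra. Qed.

Lemma T_ba_critical : beta * c + alpha = 1.
Proof. by field; rewrite gt_eqF. Qed.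

(* On [0, 1] the values of beta x + alpha lie in [0, 2], so the floor can
   only jump at c and where beta x + alpha = 2, which vNint excludes. *)
Lemma floor_T_ba_eq u v : 0 <= u <= v -> v <= 1 ->
  beta * v + alpha \isn't a Num.int -> ~ (u < c < v) ->
  Num.floor (beta * u + alpha) = Num.floor (beta * v + alpha).
Proof.
move=> /andP[u0 uv] v1 vNint ncross; have c1 := T_ba_critical.
have u_le_v : beta * u + alpha <= beta * v + alpha by rewrite lerD2r ler_pM2l.
have [vc | cv] := ltP v c.
- have v_lt1 : beta * v + alpha < 1 by rewrite -c1 ltrD2r ltr_pM2l.
  have u_ge0 : 0 <= beta * u + alpha by rewrite addr_ge0 // mulr_ge0 // ltW.
  have floor0 z : 0 <= z < 1 -> Num.floor z = 0 by move=> ?; apply: floor_def.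
  by rewrite !floor0 //; apply/andP; split; lra.
- have c_lt_v : c < v.
    rewrite lt_neqAle cv andbT; apply: contraNneq vNint => <-.
    by rewrite c1 (intr_int _ 1).
  have cu : c <= u by rewrite leNgt; apply/negP => uc; apply: ncross; rewrite uc.
  have u_ge1 : 1 <= beta * u + alpha by rewrite -c1 lerD2r ler_pM2l.
  have v_le2 : beta * v + alpha <= 2 by move: (alpha_le); nra.
  have v_lt2 : beta * v + alpha < 2.
    rewrite lt_neqAle v_le2 andbT; apply: contraNneq vNint => ->.
    exact: (intr_int _ 2).
  have floor1 z : 1 <= z < 2 -> Num.floor z = 1 by move=> ?; apply: floor_def.
  by rewrite !floor1 //; apply/andP; split; lra.
Qed.

Lemma exists_critical_crossing {b r : R} : ~ hits_discontinuity beta alpha b ->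
  0 < r -> 0 <= b - r -> b <= 1 ->
  exists j, affine_iter_on beta alpha b r j /\
    iter j f b - beta ^+ j * r < c < iter j f b.
Proof.
move=> bNhit r_gt0 br b1; apply: contrapT => Ncross.
have aff j : affine_iter_on beta alpha b r j.
  elim: j => [|j IH]; first exact: affine_iter_on0.
  apply: affine_iter_onS => // y /[dup] yJ /andP[ry yb]; have fy := IH y yJ.
  have Bb : 0 <= beta ^+ j * (b - y) by rewrite mulr_ge0 ?subr_ge0 // exprn_ge0 // ltW.
  have /andP[fy0 _] : 0 <= iter j f y <= 1 by apply: iter_T_ba_itv; lra.
  have /andP[_ fb1] : 0 <= iter j f b <= 1 by apply: iter_T_ba_itv; lra.
  apply: floor_T_ba_eq => //.
  - by rewrite fy0 fy; lra.
  - by apply/negP => hit; apply: bNhit; exists j.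
  move=> /andP[yc cb]; apply: Ncross; exists j; split => //; rewrite cb andbT.
  have : beta ^+ j * (b - y) < beta ^+ j * r by rewrite ltr_pM2l ?exprn_gt0 //; lra.
  lra.
have [j Bj] := expr_unbounded beta (2 / r) beta_gt1.
have := affine_iter_on_le2 beta alpha r_gt0 br b1 (aff j).
by rewrite -ler_pdivlMr //; lra.
Qed.

Definition nonreturning : set R :=
  [set b | c < b <= 1 /\ forall n, ~ (c < iter n f b < b)].

Lemma nonreturning_gap {b r : R} : nonreturning b -> ~ hits_discontinuity beta alpha b ->
  0 < r -> r < (b - c) / 2 ->
  exists p q, [/\ b - r <= p, p < q, q <= b, (b - c) / 4 * r <= q - p &
    forall y, p < y < q -> ~ nonreturning y].
Proof.
move=> [/andP[cb b1] noret] bNhit r_gt0 r_lt; have c_gt0 := critical_gt0.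
have br : 0 <= b - r by lra.
have [j [aff /andP[cross1 cross2]]] := exists_critical_crossing bNhit r_gt0 br b1.
have Br := affine_iter_on_le2 beta alpha r_gt0 br b1 aff.
move: aff cross1 cross2 Br; set v := iter j f b; set B := beta ^+ j => aff cross1 cross2 Br.
have B_gt0 : 0 < B by rewrite exprn_gt0.
have b_le_v : b <= v by rewrite leNgt; apply/negP => vb; apply: (noret j); rewrite cross2.
(* T^j maps (p, q) onto (c, b - r), below every point of (p, q). *)
set p := b - (v - c) / B; set q := b - (v - (b - r)) / B.
have Bp : B * (b - p) = v - c by rewrite /p; field; rewrite !gt_eqF.
have Bq : B * (b - q) = v - (b - r) by rewrite /q; field; rewrite !gt_eqF.
exists p, q; split; [nra | nra | nra | |].
  have -> : q - p = (b - r - c) / B by rewrite /p /q; field; rewrite !gt_eqF.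
  rewrite ler_pdivlMr //; nra.
move=> y /andP[py yq] [_ noret_y]; apply: (noret_y j).
have yJ : b - r < y <= b by apply/andP; split; nra.
by rewrite (aff y yJ) -/v -/B; apply/andP; split; nra.
Qed.

Lemma measurable_nonreturning : measurable nonreturning.
Proof.
have mf n := measurable_iter f n (measurable_T_ba beta alpha (ltW beta_gt0)).
have -> : nonreturning = [set b | c < b] `&` ~` [set b | 1 < b] `&`
    \bigcap_n ~` ([set b | c < iter n f b] `&` [set b | iter n f b < b]).
  apply/seteqP; split => b /=.
  - move=> [/andP[cb b1] nr]; split; first by split => //; apply/negP; rewrite -leNgt.
    by move=> n _ [h1 h2]; apply: (nr n); rewrite h1 h2.
  - move=> [[cb /negP b1] nr]; split; first by rewrite cb leNgt.
    by move=> n /andP[h1 h2]; exact: (nr n I).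
apply: measurableI; last first.
  apply: bigcapT_measurable => n; apply: measurableC.
  by apply: measurableI; apply: measurable_lt_set.
by apply: measurableI; last apply: measurableC; apply: measurable_lt_set.
Qed.

Lemma nonreturning_negligible : (@lebesgue_measure R).-negligible nonreturning.
Proof.
have cH := countable_hits_discontinuity beta alpha (lt0r_neq0 beta_gt0).
have mH : measurable (hits_discontinuity beta alpha).
  by apply: countable_measurable cH => x; exact: measurable_set1.
suff porousN : (@lebesgue_measure R).-negligible
    (nonreturning `\` hits_discontinuity beta alpha).
  apply: (negligibleS _ (negligibleU porousN (countable_negligible cH))) => x Fx.
  by have [xH|xNH] := pselect (hits_discontinuity beta alpha x); [right|left].
apply: porous_negligible; first exact: measurableD measurable_nonreturning mH.
move=> x [xF xNH]; have [/andP[cx _] _] := xF.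
have half_gt0 : 0 < (x - c) / 2 by rewrite divr_gt0 // subr_gt0.
exists ((x - c) / 4); first by rewrite divr_gt0 // subr_gt0.
apply: filterS2 (nbhs_right_gt 0) (nbhs_right_lt half_gt0) => r r_gt0 r_lt.
have [p [q [xp pq qx kr gap]]] := nonreturning_gap xF xNH r_gt0 r_lt.
exists p, q; split => //; first lra.
by move=> y ypq [yF _]; exact: gap y ypq yF.
Qed.

Lemma survivor_T_ba_locally_constant a b : a <= c -> c < b <= 1 ->
  ~ hits_discontinuity beta alpha b -> ~ nonreturning b ->
  \forall b' \near b, survivor f a b' = survivor f a b.
Proof.
move=> ac cb bNH bNF.
have [n /andP[cn nb]] : exists n, c < iter n f b < b.
  by apply: contrapT => Nn; apply: bNF; split => // n cnb; apply: Nn; exists n.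
apply: (@survivor_locally_constant _ f a b n); first by rewrite nb (le_lt_trans ac).
apply: iter_continuous => k _; apply: T_ba_continuous.
by apply/negP => hit; apply: bNH; exists k.
Qed.

End nonreturning.

Theorem corollary1p4 (R : realType) (beta alpha a : R) :
  1 < beta < 2 -> 0 <= alpha <= 2 - beta ->
  0 <= a <= (1 - alpha) / beta ->
  let c := (1 - alpha) / beta in
  let eta := fun b : R => hausdorff_dim (survivor (T_ba beta alpha) a b) in
  (* non-increasing on [c,1] *)
  (forall b1 b2 : R, c <= b1 -> b1 <= b2 -> b2 <= 1 -> (eta b2 <= eta b1)%E) /\
  (* locally constant at Lebesgue-a.e. point of [c,1] *)
  {ae (@lebesgue_measure R), forall b : R,
     c <= b <= 1 ->
     exists2 e : R, 0 < e &
       forall b' : R, c <= b' <= 1 -> `|b' - b| < e -> eta b' = eta b}.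
Proof.
move=> /andP[beta_gt1 _] /andP[alpha_ge0 alpha_le] /andP[_ a_le_c] c eta.
split=> [b1 b2 _ b12 _|]; first exact/le_hausdorff_dim/survivorS.
have cH := countable_hits_discontinuity beta alpha (lt0r_neq0 (lt_trans ltr01 beta_gt1)).
have N := negligibleU (negligibleU (countable_negligible (countable1 c))
  (countable_negligible cH)) (nonreturning_negligible _ _ beta_gt1 alpha_ge0 alpha_le).
apply: (negligibleS _ N) => b /= notconst.
apply: contrapT => /not_orP[/not_orP[bNc bNH] bNF]; apply: notconst => /andP[cb b1].
have cb1 : c < b <= 1 by rewrite lt_neqAle cb b1 !andbT; apply/eqP => cE; apply: bNc.
have [e e_gt0 he] := (nbhs_ballP _ _).1
  (survivor_T_ba_locally_constant _ _ _ _ a_le_c cb1 bNH bNF).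
by exists e => // b' _ bb'; rewrite /eta he // /ball /= distrC.
Qed.
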